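(* Let $T:X\to Y$ be a linear mapping between finite-dimensional Euclidean spaces and let $C\subset X$ be a strictly convex cone with $\operatorname{Ker}T\cap\operatorname{int}C\neq\emptyset$. Define the multifunction $F:\operatorname{Im}T\rightrightarrows X$ by $F(v)=\{u\in X: Tu=v\}\cap C$. Then $F$ is lower semicontinuous at every non-zero point $v\in\operatorname{dom}F$. Moreover, if $T(C)$ is closed, then there exists $\tau>0$ such that $$T(C)\cap\bar B_Y\subset \tau\, T(C\cap\bar B_X).$$
   Context: $\bar B_X,\bar B_Y$ are closed unit balls. $\operatorname{dom}F=\{v:F(v)\ne\emptyset\}$. $F$ is lower semicontinuous at $\bar v\in\operatorname{dom}F$ if for every open $V\subset X$ with $F(\bar v)\cap V\neq\emptyset$ there is $\varepsilon>0$ with $F(v)\cap V\neq\emptyset$ for all $v\in\operatorname{Im}T$ with $\|v-\bar v\|<\varepsilon$. A cone is regular if pointed, closed, convex, with nonempty interior; a regular cone is strictly convex if every face other than the cone itself and $\{0\}$ has dimension one (a face being a convex $\mathcal F\subset C$ such that $x,y\in C$, $\lambda x+(1-\lambda)y\in\mathcal F$ for some $0<\lambda<1$ implies $x,y\in\mathcal F$). *)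

(* X = 'rV[R]_n, Y = 'rV[R]_m with Euclidean norm. *)
From HB Require Import structures.
From mathcomp Require Import all_boot all_order all_algebra.
From mathcomp Require Import all_classical all_reals all_analysis.
Set Implicit Arguments. Unset Strict Implicit. Unset Printing Implicit Defensive.
Import Order.TTheory GRing.Theory Num.Theory.
Import numFieldNormedType.Exports.
Local Open Scope classical_set_scope.
Local Open Scope ring_scope.

Section Defs.
Variable R : realType.

Definition enorm (k : nat) (u : 'rV[R]_k) : R := Num.sqrt (\sum_(i < k) u 0 i ^+ 2).

Definition eball1 (k : nat) : set 'rV[R]_k := [set u | enorm u <= 1].

Definition is_cone (k : nat) (C : set 'rV[R]_k) : Prop :=
  C !=set0 /\ forall (l : R) x, 0 <= l -> C x -> C (l *: x).

Definition convex_set (k : nat) (C : set 'rV[R]_k) : Prop :=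
  forall x y (l : R), C x -> C y -> 0 <= l <= 1 -> C (l *: x + (1 - l) *: y).

Definition regular_cone (k : nat) (C : set 'rV[R]_k) : Prop :=
  [/\ is_cone C, C `&` [set - x | x in C] = [set 0], closed C, convex_set C
    & (interior C) !=set0].

Definition is_face (k : nat) (C Fc : set 'rV[R]_k) : Prop :=
  [/\ convex_set Fc, Fc `<=` C &
      forall x y (l : R), C x -> C y -> 0 < l < 1 -> Fc (l *: x + (1 - l) *: y) ->
        Fc x /\ Fc y].

(* (affine) dimension of a set S: the maximal number of linearly independent
   vectors in S - S *)
Definition set_dim (k : nat) (S : set 'rV[R]_k) (d : nat) : Prop :=
  (exists A : 'M[R]_(d, k), (forall i, exists x y, S x /\ S y /\ row i A = x - y)
                            /\ row_free A) /\
  (forall A : 'M[R]_(d.+1, k), (forall i, exists x y, S x /\ S y /\ row i A = x - y)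
                            -> ~~ row_free A).

Definition strictly_convex_cone (k : nat) (C : set 'rV[R]_k) : Prop :=
  regular_cone C /\
  forall Fc, is_face C Fc -> Fc !=set0 -> Fc <> C -> Fc <> [set 0] -> set_dim Fc 1.

Definition Fmap (n m : nat) (T : 'M[R]_(n, m)) (C : set 'rV[R]_n) (v : 'rV[R]_m)
  : set 'rV[R]_n := [set u | u *m T = v] `&` C.

Definition lsc_at (n m : nat) (T : 'M[R]_(n, m)) (F : 'rV[R]_m -> set 'rV[R]_n)
  (vb : 'rV[R]_m) : Prop :=
  forall V : set 'rV[R]_n, open V -> F vb `&` V !=set0 ->
    exists2 eps : R, 0 < eps &
      forall v, (exists u, u *m T = v) -> enorm (v - vb) < eps -> F v `&` V !=set0.
End Defs.

From Pilot Require Import Defs.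
From HB Require Import structures.
From mathcomp Require Import all_boot all_order all_algebra.
From mathcomp Require Import all_classical all_reals all_analysis.
From mathcomp Require Import ring lra.
Import Order.TTheory GRing.Theory Num.Theory.
Import numFieldNormedType.Exports.
Local Open Scope classical_set_scope.
Local Open Scope ring_scope.

Set Implicit Arguments.
Unset Strict Implicit.

(* Pick u0 in Ker T and in the interior of C, with the max-norm ball of radius
   2r around u0 inside C.  Scaling, the cone contains t u0 + x whenever
   |x| <= r t.  Hence every w in Im T has the preimage t u0 + w T^+ in C
   (T^+ the pseudo-inverse, t = |w T^+| / r), of norm at most c |w| for a
   constant c.  Translating a point of F(v) by such a lift of v' - v gives lower
   semicontinuity at every v, and lifting T(C) ∩ B_Y gives tau. *)

Section MatrixNorms.
Context {R : realType}.

Lemma entry_le_mx_norm a b (x : 'M[R]_(a, b)) i j : `|x i j| <= `|x|.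
Proof. by rewrite [leRHS]/Num.Def.normr /= mx_normrE (le_bigmax _ _ (i, j)). Qed.

Lemma mx_norm_le a b (x : 'M[R]_(a, b)) (c : R) :
  0 <= c -> (forall i j, `|x i j| <= c) -> `|x| <= c.
Proof.
by move=> c0 xc; rewrite [leLHS]/Num.Def.normr /= mx_normrE bigmax_le // => -[i j] _.
Qed.

Lemma mx_norm_mulmx_le a b c (u : 'M[R]_(a, b)) (P : 'M[R]_(b, c)) :
  `|u *m P| <= b%:R * (`|u| * `|P|).
Proof.
apply: mx_norm_le => [|i j]; first by rewrite !mulr_ge0.
rewrite mxE (le_trans (ler_norm_sum _ _ _)) // mulr_natl.
rewrite -[X in _ *+ X]card_ord -sumr_const.
by apply: ler_sum => k _; rewrite normrM ler_pM ?entry_le_mx_norm.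
Qed.

Lemma entry_le_enorm k (x : 'rV[R]_k) j : `|x 0 j| <= enorm x.
Proof.
rewrite /enorm -sqrtr_sqr; apply: ler_wsqrtr.
by rewrite (bigD1 j) //= lerDl sumr_ge0 // => i _; apply: sqr_ge0.
Qed.

Lemma mx_norm_le_enorm k (x : 'rV[R]_k) : `|x| <= enorm x.
Proof.
by apply: mx_norm_le => [|i j]; [exact: sqrtr_ge0 | rewrite (ord1 i) entry_le_enorm].
Qed.

Lemma enorm_le_mx_norm k (x : 'rV[R]_k) : enorm x <= Num.sqrt k%:R * `|x|.
Proof.
rewrite -[`|x|]ger0_norm // -sqrtr_sqr -sqrtrM ?ler0n //; apply: ler_wsqrtr.
rewrite -[k in k%:R]card_ord -sumr_const mulr_suml; apply: ler_sum => j _.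
by rewrite mul1r -real_normK ?num_real // lerXn2r ?nnegrE // entry_le_mx_norm.
Qed.

End MatrixNorms.

Section ConvexCone.
Context {R : realType} {k : nat} {C : set 'rV[R]_k}.
(* Qualified: the analysis library also defines a [convex_set]. *)
Hypotheses (Ccone : is_cone C) (Cconv : Defs.convex_set C).

Lemma cone_addr x y : C x -> C y -> C (x + y).
Proof.
move=> Cx Cy; have [_ Cscale] := Ccone.
have -> : x + y = 2 *: (2^-1 *: x + (1 - 2^-1) *: y).
  have -> : 1 - 2^-1 = 2^-1 :> R by lra.
  by rewrite -scalerDr scalerA mulfV ?pnatr_eq0 // scale1r.
apply: Cscale; first by rewrite ler0n.
apply: Cconv => //; apply/andP; split; first by rewrite invr_ge0 ler0n.
by rewrite invf_le1 ?ler1n ?ltr0n.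
Qed.

Lemma interior_cone_shift u0 : interior C u0 ->
  exists2 r : R, 0 < r & forall t x, 0 <= t -> `|x| <= r * t -> C (t *: u0 + x).
Proof.
have [_ Cscale] := Ccone.
move=> /nbhs_ballP[e e0 ballC]; exists (e / 2); first by rewrite divr_gt0.
move=> t x; rewrite le0r => /predU1P[-> | t0] xle.
  move: xle; rewrite mulr0 normr_le0 => /eqP->; rewrite addr0.
  by apply: Cscale => //; exact: ballC (ballxx _ e0).
have -> : t *: u0 + x = t *: (u0 + t^-1 *: x).
  by rewrite scalerDr scalerA mulfV ?gt_eqF // scale1r.
apply: Cscale (ltW t0) _; apply: ballC; rewrite -ball_normE /ball_ /=.
rewrite opprD addrA subrr sub0r normrN normrZ gtr0_norm ?invr_gt0 //.
rewrite mulrC ltr_pdivrMr //; apply: le_lt_trans xle _.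
by rewrite ltr_pM2r // ltr_pdivrMr // ltr_pMr // ltr1n.
Qed.

End ConvexCone.

Section ConeLift.
Variables (R : realType) (n m : nat) (T : 'M[R]_(n, m)) (C : set 'rV[R]_n).
Hypotheses (Ccone : is_cone C) (Cconv : Defs.convex_set C).
Variable u0 : 'rV[R]_n.
Hypotheses (Tu0 : u0 *m T = 0) (u0C : interior C u0).

Lemma cone_bounded_lift : exists2 c : R, 0 < c &
  forall w, (exists u, u *m T = w) ->
    exists z, [/\ C z, z *m T = w & `|z| <= c * enorm w].
Proof.
have [r r0 shiftC] := interior_cone_shift Ccone u0C.
set K := m%:R * `|pinvmx T|.
have K0 : 0 <= K by rewrite mulr_ge0.
have u0r : 0 <= `|u0| / r by rewrite divr_ge0 // ltW.
exists ((K + 1) * (`|u0| / r + 1)); first by apply: mulr_gt0; lra.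
move=> w [u Tu]; set d := w *m pinvmx T; set t := `|d| / r.
have t0 : 0 <= t by rewrite divr_ge0 // ltW.
have dK : `|d| <= K * enorm w.
  apply: le_trans (mx_norm_mulmx_le _ _) _.
  by rewrite mulrCA mulrC ler_wpM2l // mx_norm_le_enorm.
exists (t *: u0 + d); split.
- by apply: shiftC => //; rewrite /t mulrCA divff ?gt_eqF // mulr1.
- have wT : (w <= T)%MS by rewrite -Tu submxMl.
  by rewrite mulmxDl -scalemxAl Tu0 scaler0 add0r mulmxKpV.
- rewrite (le_trans (ler_normD _ _)) // normrZ ger0_norm //.
  have -> : t * `|u0| + `|d| = `|d| * (`|u0| / r + 1).
    by rewrite /t; field; rewrite gt_eqF.
  have en0 : 0 <= enorm w by exact: sqrtr_ge0.
  rewrite mulrAC ler_wpM2r ?(le_trans dK) ?ler_wpM2r ?lerDl //; lra.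
Qed.

Lemma lsc_at_Fmap v : lsc_at T (Fmap T C) v.
Proof.
move=> V oV [u [[/= Tu Cu] Vu]].
have /nbhs_ballP[e e0 ballV] := oV u Vu.
have [c c0 lift] := cone_bounded_lift.
exists (e / c) => [|v' [x Tx] v'v]; first by rewrite divr_gt0.
have [z [Cz Tz zle]] : exists z, [/\ C z, z *m T = v' - v & `|z| <= c * enorm (v' - v)].
  by apply: lift; exists (x - u); rewrite mulmxBl Tx Tu.
exists (u + z); split; first split.
- by rewrite /= mulmxDl Tu Tz addrC subrK.
- exact: cone_addr.
- apply: ballV; rewrite -ball_normE /ball_ /= opprD addrA subrr sub0r normrN.
  by rewrite (le_lt_trans zle) // mulrC -ltr_pdivlMr.
Qed.

Lemma cone_image_ball_subset : exists2 tau : R, 0 < tau &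
  [set u *m T | u in C] `&` @eball1 R m `<=`
  [set tau *: w | w in [set u *m T | u in C `&` @eball1 R n]].
Proof.
have [c c0 lift] := cone_bounded_lift.
have [_ Cscale] := Ccone.
set tau := Num.sqrt n%:R * c + 1.
have tau0 : 0 < tau by have := mulr_ge0 (sqrtr_ge0 n%:R) (ltW c0); rewrite /tau; lra.
exists tau => // v [[u Cu Tu] v1].
have [z [Cz Tz zle]] := lift v (ex_intro _ u Tu).
exists ((tau^-1 *: z) *m T); last first.
  by rewrite -scalemxAl scalerA mulfV ?gt_eqF // scale1r.
exists (tau^-1 *: z) => //; split; first by apply: Cscale; rewrite ?invr_ge0 ?ltW.
have zc : `|z| <= c by rewrite (le_trans zle) // ler_piMr // ltW.
rewrite /eball1 /= (le_trans (enorm_le_mx_norm _)) // normrZ.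
rewrite ger0_norm ?invr_ge0 ?(ltW tau0) //.
rewrite mulrCA mulrC ler_pdivrMr // mul1r.
by have := ler_wpM2l (sqrtr_ge0 n%:R) zc; rewrite /tau; lra.
Qed.

End ConeLift.

Theorem lemma2 (R : realType) (n m : nat) (T : 'M[R]_(n, m)) (C : set 'rV[R]_n) :
  strictly_convex_cone C ->
  (exists u, u *m T = 0 /\ (interior C) u) ->
  (forall v : 'rV[R]_m, (exists u, u *m T = v) -> v != 0 ->
      Fmap T C v !=set0 -> lsc_at T (Fmap T C) v) /\
  (closed [set u *m T | u in C] ->
     exists2 tau : R, 0 < tau &
       [set u *m T | u in C] `&` @eball1 R m `<=`
       [set tau *: w | w in [set u *m T | u in C `&` @eball1 R n]]).
Proof.
move=> [[Ccone _ _ Cconv _] _] [u0 [Tu0 u0C]]; split.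
- by move=> v _ _ _; exact: lsc_at_Fmap Tu0 u0C v.
- by move=> _; exact: cone_image_ball_subset Tu0 u0C.
Qed.
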